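(* Let $\alpha\ge1$, $\beta$ odd, and let ${\cal C}=\langle (b\mid 0),(\ell\mid fh+2f)\rangle\subseteq R_{\alpha,\beta}$ be a $\mathbb{Z}_2\mathbb{Z}_4$-additive cyclic code, where $f,h,g\in\mathbb{Z}_4[x]$ with $fhg=x^\beta-1$, $b\in\mathbb{Z}_2[x]$ divides $x^\alpha-1$, and $\ell\in\mathbb{Z}_2[x]/(x^\alpha-1)$. Then there exists $\ell'\in\mathbb{Z}_2[x]/(x^\alpha-1)$ such that ${\cal C}=\langle (b\mid 0),(\ell\tilde g\mid 2fg),(\ell'\mid fh)\rangle$.
   Context: $R_{\alpha,\beta}=\mathbb{Z}_2[x]/(x^\alpha-1)\times\mathbb{Z}_4[x]/(x^\beta-1)$ is a $\mathbb{Z}_4[x]$-module via $p\star(b\mid a)=(\tilde pb\mid pa)$, where $\tilde p\in\mathbb{Z}_2[x]$ is the reduction of $p$ mod 2. A $\mathbb{Z}_2\mathbb{Z}_4$-additive cyclic code is a $\mathbb{Z}_4[x]$-submodule of $R_{\alpha,\beta}$; $\langle\cdot\rangle$ denotes the generated submodule. *)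

From HB Require Import structures.
From mathcomp Require Import all_boot all_algebra.
Set Implicit Arguments. Unset Strict Implicit. Unset Printing Implicit Defensive.
Import GRing.Theory.
Local Open Scope ring_scope.

Definition redZ4 (z : 'Z_4) : 'F_2 := (val z)%:R.
Definition redp (p : {poly 'Z_4}) : {poly 'F_2} := map_poly redZ4 p.

(* Elements of R_{alpha,beta} are represented by pairs (b | a) of polynomial
   representatives in Z2[x] x Z4[x]; two pairs represent the same element iff
   they are congruent mod (x^alpha - 1, x^beta - 1).
   [in_code alpha beta G v] : the class of v lies in the Z4[x]-submodule <G>
   of R_{alpha,beta} generated by the (classes of the) pairs in G, for the
   action p * (b | a) = (~p b | p a). *)
Definition in_code (alpha beta : nat) (G : seq ({poly 'F_2} * {poly 'Z_4}))
  (v : {poly 'F_2} * {poly 'Z_4}) : Prop :=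
  exists c : nat -> {poly 'Z_4},
    (exists q2 : {poly 'F_2},
      v.1 = \sum_(i < size G) redp (c i) * (nth (0, 0) G i).1
            + q2 * ('X^alpha - 1))
    /\ (exists q4 : {poly 'Z_4},
      v.2 = \sum_(i < size G) c i * (nth (0, 0) G i).2
            + q4 * ('X^beta - 1)).

Definition code_eq (alpha beta : nat) (G1 G2 : seq ({poly 'F_2} * {poly 'Z_4})) : Prop :=
  forall v, in_code alpha beta G1 v <-> in_code alpha beta G2 v.

From HB Require Import structures.
From mathcomp Require Import all_boot all_algebra.
From mathcomp Require Import ring.
Import GRing.Theory.
Local Open Scope ring_scope.

(* Since beta is odd, x^beta - 1 is separable over F_2, so the reductions ~h
   and ~g of h and g are coprime; lifting a Bezout relation ~a ~h + ~c ~g = 1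
   to Z_4 gives 2f = 2f(ha + gc).  With l' = l - l ~c ~g this identity yields,
   modulo x^beta - 1,
     g * (l | fh + 2f) = (l ~g | 2fg),
     (1 + 2a - cg) * (l | fh + 2f) = (l' | fh),
     (l | fh + 2f) = c * (l ~g | 2fg) + (1 + 2a) * (l' | fh),
   so each list of generators lies in the code spanned by the other. *)


Lemma coprimep_dvd_Xn_sub1 (F : fieldType) n (y z : {poly F}) :
  n%:R != 0 :> F -> y * z %| 'X^n - 1 -> coprimep y z.
Proof.
move=> n_neq0 yz_dvd; apply/coprimepP => d dy dz.
have n_gt0 : (0 < n)%N by case: n n_neq0 {yz_dvd}; rewrite ?eqxx.
have d_dvd : d %| 'X^n - 1 by apply: dvdp_trans yz_dvd; apply: dvdp_mulr.
have d_dvd' : d %| ('X^n - 1)^`().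
  case/dvdpP: yz_dvd => w ->; rewrite !derivM.
  apply: dvdp_add; first exact/dvdp_mull/dvdp_mulr.
  by apply/dvdp_mull/dvdp_add; [apply: dvdp_mull | apply: dvdp_mulr].
have : d %| 'X * ('X^n - 1)^`() - ('X^n - 1) *+ n.
  by apply: dvdp_sub; [apply: dvdp_mull | rewrite -mulr_natr; apply: dvdp_mulr].
have -> : 'X * ('X^n - 1)^`() - ('X^n - 1) *+ n = (n%:R)%:P :> {poly F}.
  rewrite derivB derivXn -polyC1 derivC subr0 mulrnAr -exprS prednK //.
  by rewrite mulrnBl opprB addrC subrK polyC_natr.
by move/dvdp_eqp1; apply; rewrite polyC_eqp1.
Qed.

Lemma redZ4_is_zmod_morphism : zmod_morphism redZ4.
Proof. by move=> [[|[|[|[|?]]]] ?] [[|[|[|[|?]]]] ?] //; apply/val_inj. Qed.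

Lemma redZ4_is_monoid_morphism : monoid_morphism redZ4.
Proof.
split; first exact/val_inj.
by move=> [[|[|[|[|?]]]] ?] [[|[|[|[|?]]]] ?] //; apply/val_inj.
Qed.

HB.instance Definition _ :=
  GRing.isZmodMorphism.Build _ _ redZ4 redZ4_is_zmod_morphism.
HB.instance Definition _ :=
  GRing.isMonoidMorphism.Build _ _ redZ4 redZ4_is_monoid_morphism.
HB.instance Definition _ := GRing.RMorphism.copy redp (map_poly redZ4).

Lemma redp_surj (u : {poly 'F_2}) : exists p, redp p = u.
Proof.
exists (map_poly (fun x : 'F_2 => (val x)%:R : 'Z_4) u).
apply/polyP => i; rewrite coef_map coef_map_id0 //=.
by case: u`_i => [[|[|?]] ?] //; apply/val_inj.
Qed.

Lemma redp_muln2 p : redp (p *+ 2) = 0.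
Proof.
by rewrite rmorphMn -mulr_natr -polyC_natr (_ : 2%:R = 0) ?mulr0 //; apply/val_inj.
Qed.

Lemma Z4poly_muln4 (p : {poly 'Z_4}) : p *+ 4 = 0.
Proof.
by rewrite -mulr_natr -polyC_natr (_ : 4%:R = 0) ?mulr0 //; apply/val_inj.
Qed.

Lemma muln2_eq_of_redp p q : redp p = redp q -> p *+ 2 = q *+ 2.
Proof.
move/eqP; rewrite -subr_eq0 -rmorphB => /eqP red0; apply/eqP; rewrite -subr_eq0 -mulrnBl.
apply/eqP/polyP => i; move/polyP/(_ i): red0; rewrite coefMn coef_map !coef0 /=.
by case: (p - q)`_i => [[|[|[|[|?]]]] ?] // E; apply/val_inj; move/(congr1 val): E.
Qed.

Lemma redp_bezout_of_Xn_sub1 {n} {f h g : {poly 'Z_4}} :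
  odd n -> f * h * g = 'X^n - 1 -> exists a c, redp (h * a + g * c) = 1.
Proof.
move=> n_odd fhg_eq.
have /Bezout_eq1_coprimepP[[u v] /= uv_eq] : coprimep (redp h) (redp g).
  apply: (@coprimep_dvd_Xn_sub1 _ n).
    by rewrite -Fp_nat_mod // modn2 n_odd oner_neq0.
  apply/dvdpP; exists (redp f).
  by rewrite mulrA -!rmorphM fhg_eq rmorphB rmorph1 rmorphXn /= /redp map_polyX.
have [a ra] := redp_surj u; have [c rc] := redp_surj v.
by exists a, c; rewrite rmorphD !rmorphM /= ra rc mulrC [redp g * _]mulrC.
Qed.

Section Codes.

Context {alpha beta : nat}.

Section OneCode.

Context {G : seq ({poly 'F_2} * {poly 'Z_4})}.
Local Notation code := (in_code alpha beta G).

Lemma in_code_period q2 q4 : code (q2 * ('X^alpha - 1), q4 * ('X^beta - 1)).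
Proof.
exists (fun=> 0); split; [exists q2 | exists q4];
  by rewrite big1 ?add0r // => i _; rewrite ?rmorph0 mul0r.
Qed.

Lemma in_code0 : code (0, 0).
Proof. by have := in_code_period 0 0; rewrite !mul0r. Qed.

Lemma in_code_add {v w} : code v -> code w -> code (v.1 + w.1, v.2 + w.2).
Proof.
move=> [c [[p2 ->] [p4 ->]]] [d [[q2 ->] [q4 ->]]].
exists (fun i => c i + d i); split; [exists (p2 + q2) | exists (p4 + q4)].
  under [in RHS]eq_bigr => i _ do rewrite rmorphD mulrDl.
  by rewrite big_split /= mulrDl addrACA.
under [in RHS]eq_bigr => i _ do rewrite mulrDl.
by rewrite big_split /= mulrDl addrACA.
Qed.

Lemma in_code_act p {v} : code v -> code (redp p * v.1, p * v.2).
Proof.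
move=> [c [[q2 ->] [q4 ->]]]; exists (fun i => p * c i).
split; [exists (redp p * q2) | exists (p * q4)];
  rewrite /= mulrDr mulr_sumr mulrA; congr (_ + _); apply: eq_bigr => i _;
  by rewrite ?rmorphM mulrA.
Qed.

Lemma in_code_mem {v} : v \in G -> code v.
Proof.
move=> vG; have iG : (index v G < size G)%N by rewrite index_mem.
exists (fun j => (j == index v G)%:R); split; [exists 0 | exists 0];
  rewrite mul0r addr0; under eq_bigr => j _ do rewrite ?rmorph_nat mulr_natl mulrb;
  by rewrite -big_mkcond (big_ord1_eq _ (fun j => _ (nth (0, 0) G j))) iG nth_index.
Qed.

Lemma in_code_congr q2 q4 {v x y} : code v ->
  x = v.1 + q2 * ('X^alpha - 1) -> y = v.2 + q4 * ('X^beta - 1) ->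
  code (x, y).
Proof. by move=> cv -> ->; apply: in_code_add cv (in_code_period q2 q4). Qed.

End OneCode.

Lemma in_code_sub G1 G2 v :
  {in G1, forall w, in_code alpha beta G2 w} ->
  in_code alpha beta G1 v -> in_code alpha beta G2 v.
Proof.
move=> G12 [c [[q2 E1] [q4 E2]]]; case: v E1 E2 => x y /= -> ->.
apply: (in_code_congr q2 q4 (v := (_, _))) => //.
apply: (big_ind2 (fun x y => in_code alpha beta G2 (x, y))).
- exact: in_code0.
- by move=> ? ? ? ? /in_code_add; apply.
- by move=> i _; apply/in_code_act/G12/mem_nth.
Qed.

Lemma code_eq_of_gens G1 G2 :
  {in G1, forall w, in_code alpha beta G2 w} ->
  {in G2, forall w, in_code alpha beta G1 w} -> code_eq alpha beta G1 G2.
Proof. by move=> G12 G21 v; split; apply: in_code_sub. Qed.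

End Codes.

Section Generators.

Variables (alpha beta : nat) (f h g a c : {poly 'Z_4}) (b l : {poly 'F_2}).
Hypothesis fhg_eq : f * h * g = 'X^beta - 1.
Hypothesis bezout : redp (h * a + g * c) = 1.

Local Notation l' := (l - l * redp c * redp g).
Local Notation C := [:: (b, 0); (l, f * h + f *+ 2)].
Local Notation C' := [:: (b, 0); (l * redp g, (f * g) *+ 2); (l', f * h)].

Lemma twice_f_bezout : f *+ 2 = (f * (h * a + g * c)) *+ 2.
Proof.
by rewrite -mulrnAr (muln2_eq_of_redp (h * a + g * c) 1) ?bezout ?rmorph1 ?mulr_natr.
Qed.

Lemma old_gens_in_new_code : {in C, forall w, in_code alpha beta C' w}.
Proof.
have [C'b C'g C'l'] : [/\ in_code alpha beta C' (b, 0),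
    in_code alpha beta C' (l * redp g, (f * g) *+ 2)
  & in_code alpha beta C' (l', f * h)].
  by split; apply: in_code_mem; rewrite !inE eqxx ?orbT.
move=> w; rewrite !inE => /orP[] /eqP -> //.
apply: (in_code_congr 0 0
  (in_code_add (in_code_act c C'g) (in_code_act (1 + a *+ 2) C'l'))) => /=.
  by rewrite rmorphD rmorph1 /= redp_muln2 addr0; ring.
by rewrite twice_f_bezout; ring.
Qed.

Lemma new_gens_in_old_code : {in C', forall w, in_code alpha beta C w}.
Proof.
have [Cb Cl] : in_code alpha beta C (b, 0) /\ in_code alpha beta C (l, f * h + f *+ 2).
  by split; apply: in_code_mem; rewrite !inE eqxx ?orbT.
move=> w; rewrite !inE => /or3P[] /eqP -> //.
  by apply: (in_code_congr 0 (-1) (in_code_act g Cl)) => /=; [ring | rewrite -fhg_eq; ring].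
apply: (in_code_congr 0 c (in_code_act (1 + a *+ 2 - c * g) Cl)) => /=.
  by rewrite rmorphB rmorphD rmorph1 rmorphM /= redp_muln2 addr0; ring.
rewrite -fhg_eq.
have -> : (1 + a *+ 2 - c * g) * (f * h + f *+ 2) + c * (f * h * g) =
  f * h + (f *+ 2 - (f * (h * a + g * c)) *+ 2) + (a * f * (h + 1)) *+ 4 by ring.
by rewrite -twice_f_bezout subrr Z4poly_muln4 !addr0.
Qed.

End Generators.

Theorem mainTheorem5 (alpha beta : nat) (f h g : {poly 'Z_4})
  (b l : {poly 'F_2}) :
  (0 < alpha)%N -> odd beta ->
  f * h * g = 'X^beta - 1 ->
  b %| 'X^alpha - 1 ->
  exists l' : {poly 'F_2},
    code_eq alpha beta
      [:: (b, 0); (l, f * h + f *+ 2)]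
      [:: (b, 0); (l * redp g, (f * g) *+ 2); (l', f * h)].
Proof.
move=> _ beta_odd fhg_eq _.
have [a [c bezout]] := redp_bezout_of_Xn_sub1 beta_odd fhg_eq.
exists (l - l * redp c * redp g); apply: code_eq_of_gens.
  exact: old_gens_in_new_code bezout.
exact: new_gens_in_old_code fhg_eq bezout.
Qed.
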